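(* In the setting below with $P=\mathfrak S$ and the absolute error criterion: (i) if $\{S_d\}$ is polynomially tractable and $\lambda_1\ge1$, then $b_d\in O(\ln d)$; (ii) if $\{S_d\}$ is strongly polynomially tractable and $\lambda_1\ge1$, then $b_d\in O(1)$ and $\lambda_2<1/\lambda_1$.
   Context: Setting: $S_1:H_1\to G_1$ is a compact linear operator between real Hilbert spaces ($H_1$ infinite-dimensional separable); $\lambda=(\lambda_m)_{m\in\mathbb N}$, $\lambda_1\ge\lambda_2\ge\dots\ge0$, are the eigenvalues of $S_1^\dagger S_1$. $S_d=S_1^{\otimes d}:H_1^{\otimes d}\to G_1^{\otimes d}$. For each $d$ fix $\emptyset\ne I_d=\{i_1<\dots<i_{a_d}\}\subset\{1,\dots,d\}$ ($I_1=\{1\}$), put $a_d=\#I_d$, $b_d=d-a_d$, and fix one type $P\in\{\mathfrak S,\mathfrak A\}$ for all $d$; the problem $\{S_d\}$ is the family of restrictions of $S_d$ to the $I_d$-symmetric subspace (if $P=\mathfrak S$) or $I_d$-antisymmetric subspace (if $P=\mathfrak A$) of $H_1^{\otimes d}$, i.e. the range of $\frac1{a_d!}\sum_{\pi}(\pm1)U_\pi$, the sum over permutations $\pi$ of $\{1,\dots,d\}$ fixing all points outside $I_d$, $U_\pi(f_1\otimes\cdots\otimes f_d)=f_{\pi(1)}\otimes\cdots\otimes f_{\pi(d)}$, sign $(-1)^{|\pi|}$ used for $\mathfrak A$. Let $\nabla_d=\{k\in\mathbb N^d:k_{i_1}\le\dots\le k_{i_{a_d}}\}$ for $P=\mathfrak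 S$ and with strict inequalities for $P=\mathfrak A$; $\lambda_{d,k}=\prod_{l=1}^d\lambda_{k_l}$; $\psi:\mathbb N\to\nabla_d$ a bijection with $\lambda_{d,\psi(1)}\ge\lambda_{d,\psi(2)}\ge\cdots$. These are exactly the eigenvalues of $S_d^\dagger S_d$ on the subspace, and the information complexity (absolute error) is $n(\epsilon,d)=\#\{k\in\nabla_d:\lambda_{d,k}>\epsilon^2\}$, the initial error $\epsilon^{\rm init}_d=\sqrt{\lambda_{d,\psi(1)}}$ (equal to $\lambda_1^{d/2}$ if $P=\mathfrak S$, and $\sqrt{\lambda_1^{b_d}\lambda_1\lambda_2\cdots\lambda_{a_d}}$ if $P=\mathfrak A$). Polynomially tractable: $\exists C,p>0,q\ge0$ with $n(\epsilon,d)\le C\epsilon^{-p}d^q$ for all $d\in\mathbb N,\epsilon\in(0,1]$; strongly polynomially tractable: this with $q=0$. Standing assumptions: $\lambda_2>0$ and $\epsilon_d^{\rm init}>0$ for all $d$. $\ell_\tau$: sequences with $\|\lambda\|_{\ell_\tau}^\tau=\sum_m\lambda_m^\tau<\infty$. *)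

From Stdlib Require Import Reals Lra Lia List.
Open Scope R_scope.

(* Conventions (0-based): lam m is the paper's lambda_{m+1}; so lam 0 = lambda_1,
   lam 1 = lambda_2.  A multi-index k in N^d is a list of length d whose
   entry at position l (0-based) is the 0-based index of the eigenvalue. *)

Definition lam_prod (lam : nat -> R) (k : list nat) : R :=
  fold_right (fun m acc => lam m * acc) 1 k.

(* I d i : position i (0-based, i < d) belongs to I_d. *)
Definition in_nabla_sym (I : nat -> nat -> bool) (d : nat) (k : list nat) : Prop :=
  length k = d /\
  forall i j, (i < j < d)%nat -> I d i = true -> I d j = true ->
    (nth i k 0 <= nth j k 0)%nat.

(* "n(eps,d) <= M":  the set {k in nabla_d : lambda_{d,k} > eps^2}
   has cardinality at most M (every finite duplicate-free list of its
   elements has length at most M). *)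
Definition info_compl_le (lam : nat -> R) (I : nat -> nat -> bool)
  (eps : R) (d : nat) (M : R) : Prop :=
  forall L : list (list nat), NoDup L ->
    (forall k, In k L -> in_nabla_sym I d k /\ lam_prod lam k > eps ^ 2) ->
    INR (length L) <= M.

Definition poly_tractable (lam : nat -> R) (I : nat -> nat -> bool) : Prop :=
  exists C p q : R, C > 0 /\ p > 0 /\ q >= 0 /\
    forall (d : nat) (eps : R), (1 <= d)%nat -> 0 < eps <= 1 ->
      info_compl_le lam I eps d (C * Rpower eps (- p) * Rpower (INR d) q).

Definition strongly_poly_tractable (lam : nat -> R) (I : nat -> nat -> bool) : Prop :=
  exists C p : R, C > 0 /\ p > 0 /\
    forall (d : nat) (eps : R), (1 <= d)%nat -> 0 < eps <= 1 ->
      info_compl_le lam I eps d (C * Rpower eps (- p)).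

Fixpoint count_below (P : nat -> bool) (n : nat) : nat :=
  match n with
  | O => O
  | S n' => (count_below P n' + (if P n' then 1 else 0))%nat
  end.
Definition a_of (I : nat -> nat -> bool) (d : nat) : nat := count_below (I d) d.
Definition b_of (I : nat -> nat -> bool) (d : nat) : nat := (d - a_of I d)%nat.

Definition index_family (I : nat -> nat -> bool) : Prop :=
  (forall d i, I d i = true -> (i < d)%nat) /\
  (forall d, (1 <= d)%nat -> exists i, (i < d)%nat /\ I d i = true).

From Stdlib Require Import Reals Lra Lia List FinFun.
Import ListNotations.
Open Scope R_scope.

(* Put mu = min(1, lambda_2).  A multi-index with
   entries in {0,1}, zero on I_d and with exactly j ones, lies in nabla_d and
   satisfies lambda_{d,k} = lambda_1^(d-j) lambda_2^j >= mu^j.  There are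
   binom(b_d, j) of them, so n(eps,d) >= binom(b_d, j) whenever eps^2 < mu^j.

   Take j = b_d / M and eps^2 = mu^j / 2.  Since
   binom(b_d, j) >= M^j, a bound n(eps,d) <= C eps^(-p) T gives, after taking
   logarithms, j ln 2 <= ln C + (p/2) ln 2 + ln T as soon as
   ln M >= ln 2 - (p/2) ln mu; hence b_d < M (j + 1) = O(ln T + 1).  The choice
   T = d^q yields (i) and T = 1 the first half of (ii).

   If lambda_1 lambda_2 >= 1, the m+1 sorted
   multi-indices 0^(m+t) 1^(m-t), t <= m, lie in nabla_(2m) and have
   lambda_{2m,k} = lambda_1^(2t) (lambda_1 lambda_2)^(m-t) >= 1, which
   contradicts n(1/2, 2m) <= C 2^p for m large. *)

Fixpoint binom (m j : nat) : nat :=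
  match m, j with
  | _, O => 1
  | O, S _ => 0
  | S m', S j' => binom m' (S j') + binom m' j'
  end%nat.

Lemma binom_0 m : binom m 0 = 1%nat.
Proof. destruct m; reflexivity. Qed.

Lemma binom_S_le m j : (binom m j <= binom (S m) j)%nat.
Proof. destruct j; simpl; [rewrite binom_0 |]; lia. Qed.

Lemma binom_mono m m' j : (m <= m')%nat -> (binom m j <= binom m' j)%nat.
Proof. induction 1 as [|m' _ IH]; [lia|]. pose proof (binom_S_le m' j); lia. Qed.

Lemma binom_add_lower m t j : (t * binom m j <= binom (m + t) (S j))%nat.
Proof.
  induction t as [|t IH]; [simpl; lia|].
  rewrite Nat.add_succ_r; simpl binom.
  pose proof (binom_mono m (m + t) j ltac:(lia)); nia.
Qed.

Lemma binom_pow_diag M j : (M ^ j <= binom (M * j) j)%nat.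
Proof.
  induction j as [|j IH]; [simpl; rewrite binom_0; lia|].
  replace (M * S j)%nat with (M * j + M)%nat by lia.
  pose proof (binom_add_lower (M * j) M j); simpl Nat.pow; nia.
Qed.

Lemma binom_pow_lower M j b : (M * j <= b)%nat -> (M ^ j <= binom b j)%nat.
Proof. intros Hb. pose proof (binom_pow_diag M j). pose proof (binom_mono _ _ j Hb). lia. Qed.

Fixpoint free_count (P : nat -> bool) (n : nat) : nat :=
  match n with
  | O => O
  | S n' => (free_count P n' + (if P n' then 0 else 1))%nat
  end.

Lemma b_of_free_count I d : b_of I d = free_count (I d) d.
Proof.
  assert (Hsplit : forall P n, (count_below P n + free_count P n)%nat = n).
  { intros P n; induction n as [|n IH]; simpl; [reflexivity|]; destruct (P n); lia. }
  unfold b_of, a_of. pose proof (Hsplit (I d) d); lia.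
Qed.

(* spread P n j: the 0/1 lists of length n with exactly j ones, all placed at
   positions outside P; the last coordinate is chosen first. *)
Fixpoint spread (P : nat -> bool) (n j : nat) : list (list nat) :=
  match n with
  | O => match j with O => [[]] | S _ => [] end
  | S n' =>
      map (fun k => k ++ [0%nat]) (spread P n' j) ++
      match P n', j with
      | false, S j' => map (fun k => k ++ [1%nat]) (spread P n' j')
      | _, _ => []
      end
  end.

Lemma spread_length P n j : length (spread P n j) = binom (free_count P n) j.
Proof.
  revert j; induction n as [|n IH]; intros j; simpl.
  - destruct j; reflexivity.
  - rewrite length_app, length_map, IH.
    destruct (P n), j as [|j]; simpl; rewrite ?length_map, ?IH, ?Nat.add_0_r, ?Nat.add_1_r, ?binom_0; simpl; lia.
Qed.

Lemma app_single_injective (a : nat) : Injective (fun k : list nat => k ++ [a]).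
Proof. intros x y Hxy. now apply app_inj_tail in Hxy. Qed.

Lemma spread_NoDup P n j : NoDup (spread P n j).
Proof.
  revert j; induction n as [|n IH]; intros j; simpl.
  - destruct j; repeat constructor; easy.
  - apply NoDup_app.
    + apply Injective_map_NoDup; [apply app_single_injective | apply IH].
    + destruct (P n), j; try constructor.
      apply Injective_map_NoDup; [apply app_single_injective | apply IH].
    + intros x Hx0 Hx1. apply in_map_iff in Hx0 as [k0 [<- _]].
      destruct (P n), j; try contradiction.
      apply in_map_iff in Hx1 as [k1 [Hk _]].
      apply app_inj_tail in Hk as [_ Hk]; discriminate.
Qed.

Lemma in_spread_S P n j x : In x (spread P (S n) j) ->
  (exists k, In k (spread P n j) /\ x = k ++ [0%nat]) \/
  (exists j' k, P n = false /\ j = S j' /\ In k (spread P n j') /\ x = k ++ [1%nat]).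
Proof.
  simpl. intros Hx. apply in_app_or in Hx as [Hx | Hx].
  - left. apply in_map_iff in Hx as [k [<- Hk]]. eauto.
  - right. destruct (P n), j as [|j']; try contradiction.
    apply in_map_iff in Hx as [k [<- Hk]]. exists j', k. auto.
Qed.

Lemma spread_elem_length P n j x : In x (spread P n j) -> length x = n.
Proof.
  revert j x; induction n as [|n IH]; intros j x Hx.
  - destruct j; simpl in Hx; [destruct Hx as [<- | []]; reflexivity | contradiction].
  - apply in_spread_S in Hx as [[k [Hk ->]] | [j' [k [_ [_ [Hk ->]]]]]];
      rewrite length_app; simpl; erewrite IH by eassumption; lia.
Qed.

Lemma spread_zero_on_P P n j x : In x (spread P n j) ->
  forall t, (t < n)%nat -> P t = true -> nth t x 0%nat = 0%nat.
Proof.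
  revert j x; induction n as [|n IH]; intros j x Hx t Ht HPt; [lia|].
  apply in_spread_S in Hx as [[k [Hk ->]] | [j' [k [HPn [_ [Hk ->]]]]]];
    (destruct (Nat.lt_ge_cases t n) as [Htn | Htn];
     [rewrite app_nth1 by (erewrite spread_elem_length by eassumption; lia);
      eapply IH; eassumption |]).
  - rewrite app_nth2 by (erewrite spread_elem_length by eassumption; lia).
    erewrite spread_elem_length by eassumption.
    now replace (t - n)%nat with 0%nat by lia.
  - replace t with n in HPt by lia. congruence.
Qed.

Lemma lam_prod_app lam l1 l2 :
  lam_prod lam (l1 ++ l2) = lam_prod lam l1 * lam_prod lam l2.
Proof. induction l1 as [|a l1 IH]; unfold lam_prod in *; simpl; [ring|]. rewrite IH; ring. Qed.

Lemma spread_lam_prod lam mu P n j x :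
  1 <= lam 0%nat -> 0 <= mu <= lam 1%nat ->
  In x (spread P n j) -> mu ^ j <= lam_prod lam x.
Proof.
  intros H0 Hmu. revert j x; induction n as [|n IH]; intros j x Hx.
  - destruct j; simpl in Hx; [destruct Hx as [<- | []]; simpl; lra | contradiction].
  - apply in_spread_S in Hx as [[k [Hk ->]] | [j' [k [_ [-> [Hk ->]]]]]];
      rewrite lam_prod_app; simpl; specialize (IH _ _ Hk).
    + pose proof (pow_le mu j ltac:(lra)); nra.
    + pose proof (pow_le mu j' ltac:(lra)); nra.
Qed.

(* Constant on I_d, the elements are trivially sorted along I_d. *)
Lemma spread_in_nabla I d j x : In x (spread (I d) d j) -> in_nabla_sym I d x.
Proof.
  intros Hx. split; [eapply spread_elem_length; eassumption|].
  intros i i' Hii' Hi Hi'.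
  rewrite (spread_zero_on_P _ _ _ _ Hx i), (spread_zero_on_P _ _ _ _ Hx i') by (assumption || lia).
  lia.
Qed.

Lemma binom_le_info_compl lam I mu eps N d j :
  1 <= lam 0%nat -> 0 <= mu <= lam 1%nat -> eps ^ 2 < mu ^ j ->
  info_compl_le lam I eps d N -> INR (binom (b_of I d) j) <= N.
Proof.
  intros H0 Hmu Heps Hinfo.
  rewrite b_of_free_count, <- spread_length.
  apply Hinfo; [apply spread_NoDup|]. intros k Hk. split.
  - eapply spread_in_nabla; eassumption.
  - pose proof (spread_lam_prod lam mu _ _ _ _ H0 Hmu Hk); lra.
Qed.
Lemma ln_le_compat x y : 0 < x -> x <= y -> ln x <= ln y.
Proof.
  intros Hx [Hlt | ->]; [left; now apply ln_increasing | lra].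
Qed.

Lemma exp_le_compat x y : x <= y -> exp x <= exp y.
Proof. intros [Hlt | ->]; [left; now apply exp_increasing | lra]. Qed.

Lemma block_count_bound lam I C p :
  1 <= lam 0%nat -> 0 < lam 1%nat -> 0 < C -> 0 < p ->
  exists M : nat, (0 < M)%nat /\ forall d T, 0 < T ->
    (forall eps, 0 < eps <= 1 ->
       info_compl_le lam I eps d (C * Rpower eps (- p) * T)) ->
    INR (b_of I d / M) * ln 2 <= ln C + p * ln 2 / 2 + ln T.
Proof.
  intros H0 H1 HC Hp.
  pose proof ln_lt_2 as Hln2.
  set (mu := Rmin 1 (lam 1%nat)).
  assert (Hmu : 0 < mu <= lam 1%nat) by (split; [apply Rmin_glb_lt; lra | apply Rmin_r]).
  assert (Hlnmu : ln mu <= 0) by (rewrite <- ln_1; apply ln_le_compat; [lra | apply Rmin_l]).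
  set (lnM := ln 2 - p * ln mu / 2).
  destruct (INR_unbounded (exp lnM)) as [M HM].
  assert (HMpos : 0 < INR M) by (pose proof (exp_pos lnM); lra).
  exists M; split; [apply INR_lt; simpl; lra|].
  intros d T HT Hinfo.
  set (j := (b_of I d / M)%nat).
  assert (Hj : 0 <= INR j) by apply pos_INR.
  (* eps^2 = mu^j / 2, written in exponential form. *)
  set (eps := exp ((INR j * ln mu - ln 2) / 2)).
  assert (Heps : 0 < eps <= 1).
  { split; [apply exp_pos|]. rewrite <- exp_0. apply exp_le_compat. nra. }
  assert (Hsmall : eps ^ 2 < mu ^ j).
  { replace (eps ^ 2) with (exp (INR j * ln mu - ln 2))
      by (unfold eps; simpl; rewrite Rmult_1_r, <- exp_plus; f_equal; field).
    rewrite <- (exp_ln (mu ^ j)), ln_pow by (try apply pow_lt; lra).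
    apply exp_increasing; lra. }
  pose proof (binom_le_info_compl lam I mu eps _ d j H0 ltac:(lra) Hsmall (Hinfo eps Heps))
    as Hcount.
  assert (Hpow : INR M ^ j <= INR (binom (b_of I d) j)).
  { rewrite <- pow_INR. apply le_INR, binom_pow_lower, Nat.Div0.mul_div_le. }
  (* Logarithm of  M^j <= binom(b_d, j) <= C eps^(-p) T. *)
  assert (Hlog : INR j * ln (INR M) <= ln C + - p * ((INR j * ln mu - ln 2) / 2) + ln T).
  { rewrite <- ln_pow by lra.
    apply Rle_trans with (ln (C * Rpower eps (- p) * T)).
    - apply ln_le_compat; [apply pow_lt | ]; lra.
    - assert (0 < Rpower eps (- p)) by apply exp_pos.
      rewrite !ln_mult, ln_Rpower by (try apply Rmult_lt_0_compat; lra).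
      unfold eps; rewrite ln_exp; lra. }
  assert (HlnM : lnM <= ln (INR M)).
  { rewrite <- (ln_exp lnM). apply ln_le_compat; [apply exp_pos | lra]. }
  assert (INR j * lnM <= INR j * ln (INR M)) by (apply Rmult_le_compat_l; lra).
  unfold lnM in *. nra.
Qed.

Lemma b_of_log_bound lam I C p :
  1 <= lam 0%nat -> 0 < lam 1%nat -> 0 < C -> 0 < p ->
  exists M : nat, forall d T, 0 < T ->
    (forall eps, 0 < eps <= 1 ->
       info_compl_le lam I eps d (C * Rpower eps (- p) * T)) ->
    INR (b_of I d) <= INR M * ((ln C + p * ln 2 / 2 + ln T) / ln 2 + 1).
Proof.
  intros H0 H1 HC Hp.
  destruct (block_count_bound lam I C p H0 H1 HC Hp) as [M [HM0 HM]].
  exists M. intros d T HT Hinfo.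
  pose proof ln_lt_2 as Hln2.
  set (j := (b_of I d / M)%nat) in *.
  assert (Hj : INR j <= (ln C + p * ln 2 / 2 + ln T) / ln 2).
  { apply Rmult_le_reg_r with (ln 2); [lra|].
    unfold Rdiv; rewrite Rmult_assoc, Rinv_l, Rmult_1_r; [|lra].
    now apply HM. }
  assert (Hb : (b_of I d < M * S j)%nat) by (apply Nat.mul_succ_div_gt; lia).
  apply lt_INR in Hb; rewrite mult_INR, S_INR in Hb.
  assert (INR M * (INR j + 1) <= INR M * ((ln C + p * ln 2 / 2 + ln T) / ln 2 + 1))
    by (apply Rmult_le_compat_l; [apply pos_INR | lra]).
  lra.
Qed.

(* Absorbing the additive constant into ln d, once ln d >= 1. *)
Lemma affine_le_linear a q c L :
  0 <= q -> 0 < c -> 1 <= L -> (a + q * L) / c + 1 <= ((Rabs a + q) / c + 1) * L.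
Proof.
  intros Hq Hc HL.
  assert (Ha : a <= Rabs a * L) by (pose proof (Rle_abs a); pose proof (Rabs_pos a); nra).
  assert (Hic : 0 < / c) by (apply Rinv_0_lt_compat; lra).
  unfold Rdiv. nra.
Qed.

Definition staircase (m t : nat) : list nat :=
  repeat 0%nat (m + t) ++ repeat 1%nat (m - t).

Lemma staircase_injective m : Injective (staircase m).
Proof.
  assert (Hzeros : forall t, count_occ Nat.eq_dec (staircase m t) 0%nat = (m + t)%nat).
  { intros t. unfold staircase.
    rewrite count_occ_app, count_occ_repeat_eq, count_occ_repeat_neq by congruence. lia. }
  intros t t' Heq.
  apply (f_equal (fun l => count_occ Nat.eq_dec l 0%nat)) in Heq.
  rewrite !Hzeros in Heq. lia.
Qed.

Lemma nth_staircase m t i :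
  nth i (staircase m t) 0%nat =
  if Nat.ltb i (m + t) then 0%nat else if Nat.ltb i (m + t + (m - t)) then 1%nat else 0%nat.
Proof.
  unfold staircase.
  destruct (Nat.ltb_spec i (m + t)).
  - rewrite app_nth1 by (rewrite repeat_length; lia). apply nth_repeat_lt; lia.
  - rewrite app_nth2 by (rewrite repeat_length; lia). rewrite repeat_length.
    destruct (Nat.ltb_spec i (m + t + (m - t))).
    + apply nth_repeat_lt; lia.
    + apply nth_overflow. rewrite repeat_length; lia.
Qed.

(* Staircases are sorted everywhere, hence in nabla_(2m) for any I. *)
Lemma staircase_in_nabla I m t : (t <= m)%nat -> in_nabla_sym I (2 * m) (staircase m t).
Proof.
  intros Ht. split; [unfold staircase; rewrite length_app, !repeat_length; lia|].
  intros i j Hij _ _. rewrite !nth_staircase.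
  destruct (Nat.ltb_spec i (m + t)), (Nat.ltb_spec j (m + t)),
    (Nat.ltb_spec i (m + t + (m - t))), (Nat.ltb_spec j (m + t + (m - t))); lia.
Qed.

Lemma lam_prod_repeat lam a n : lam_prod lam (repeat a n) = lam a ^ n.
Proof. induction n as [|n IH]; unfold lam_prod in *; simpl; [reflexivity|]. now rewrite IH. Qed.

(* lambda_{2m,k} = lambda_1^(2t) (lambda_1 lambda_2)^(m-t) >= 1. *)
Lemma staircase_lam_prod lam m t :
  1 <= lam 0%nat -> 1 <= lam 0%nat * lam 1%nat -> (t <= m)%nat ->
  1 <= lam_prod lam (staircase m t).
Proof.
  intros H0 H01 Ht. unfold staircase.
  rewrite lam_prod_app, !lam_prod_repeat.
  replace (m + t)%nat with (t + t + (m - t))%nat by lia.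
  rewrite pow_add, Rmult_assoc, <- Rpow_mult_distr.
  pose proof (pow_R1_Rle (lam 0%nat) (t + t) H0).
  pose proof (pow_R1_Rle (lam 0%nat * lam 1%nat) (m - t) H01).
  nra.
Qed.

(* Strong tractability forces lambda_2 < 1/lambda_1: otherwise n(1/2, 2m) >= m+1
   for all m. *)
Lemma strong_tractability_lam2_small lam I :
  1 <= lam 0%nat -> strongly_poly_tractable lam I -> lam 1%nat < 1 / lam 0%nat.
Proof.
  intros H0 [C [p [HC [Hp Hspt]]]].
  destruct (Rlt_or_le (lam 1%nat) (1 / lam 0%nat)) as [Hlt | Hge]; [exact Hlt | exfalso].
  assert (H01 : 1 <= lam 0%nat * lam 1%nat).
  { apply (Rmult_le_compat_l (lam 0%nat)) in Hge; [|lra].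
    replace (lam 0%nat * (1 / lam 0%nat)) with 1 in Hge by (field; lra). lra. }
  destruct (INR_unbounded (C * Rpower (1 / 2) (- p))) as [m Hm].
  assert (Hcard : INR (length (map (staircase (S m)) (seq 0 (S (S m)))))
                  <= C * Rpower (1 / 2) (- p)).
  { apply (Hspt (2 * S m)%nat); [lia | lra | |].
    - apply Injective_map_NoDup; [apply staircase_injective | apply seq_NoDup].
    - intros k Hk. apply in_map_iff in Hk as [t [<- Ht]]. apply in_seq in Ht.
      split; [apply staircase_in_nabla; lia|].
      pose proof (staircase_lam_prod lam (S m) t H0 H01 ltac:(lia)). lra. }
  rewrite length_map, length_seq, !S_INR in Hcard. lra.
Qed.

Theorem proposition4 (lam : nat -> R) (I : nat -> nat -> bool)
  (Hnonneg : forall m, 0 <= lam m)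
  (Hdecr : forall m, lam (S m) <= lam m)
  (Hcompact : Un_cv lam 0)
  (Hlam2 : lam 1%nat > 0)
  (HI : index_family I)
  (Hinit : forall d : nat, (1 <= d)%nat -> lam 0%nat ^ d > 0)
  (Hlam1 : lam 0%nat >= 1) :
  (poly_tractable lam I ->
     exists (K : R) (d0 : nat), forall d : nat, (d0 <= d)%nat ->
       INR (b_of I d) <= K * ln (INR d))
  /\
  (strongly_poly_tractable lam I ->
     (exists K : R, forall d : nat, (1 <= d)%nat -> INR (b_of I d) <= K)
     /\ lam 1%nat < 1 / lam 0%nat).
Proof.
  assert (H0 : 1 <= lam 0%nat) by lra.
  split.
  - intros [C [p [q [HC [Hp [Hq Hpt]]]]]].
    destruct (b_of_log_bound lam I C p H0 Hlam2 HC Hp) as [M HM].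
    exists (INR M * ((Rabs (ln C + p * ln 2 / 2) + q) / ln 2 + 1)), 3%nat.
    intros d Hd.
    assert (Hlnd : 1 <= ln (INR d)).
    { apply le_INR in Hd. simpl in Hd. rewrite <- (ln_exp 1).
      apply ln_le_compat; [apply exp_pos | pose proof exp_le_3; lra]. }
    eapply Rle_trans.
    { apply (HM d (Rpower (INR d) q)); [apply exp_pos|].
      intros eps Heps. apply Hpt; [lia | exact Heps]. }
    rewrite ln_Rpower, Rmult_assoc.
    apply Rmult_le_compat_l; [apply pos_INR|].
    apply affine_le_linear; [lra | pose proof ln_lt_2; lra | exact Hlnd].
  - intros Hspt. split; [|now apply (strong_tractability_lam2_small lam I)].
    destruct Hspt as [C [p [HC [Hp Hspt]]]].
    destruct (b_of_log_bound lam I C p H0 Hlam2 HC Hp) as [M HM].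
    exists (INR M * ((ln C + p * ln 2 / 2 + ln 1) / ln 2 + 1)). intros d Hd.
    apply HM; [lra|]. intros eps Heps. rewrite Rmult_1_r. now apply Hspt.
Qed.
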